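(* Let $G$ be a graph with $n$ nodes, degree matrix $\mathbf{D}$ and normalized graph Laplacian $\tilde{\mathbf{L}}$, and let $\tilde{\mathbf{L}}=\mathbf{U}\mathbf{\Sigma}\mathbf{U}^T$ be an eigendecomposition of $\tilde{\mathbf{L}}$. Then for any $n\times n$ permutation matrix $\mathbf{M}$, the matrix $\mathbf{D}^{1/2}\mathbf{U}\mathbf{\Sigma}^{1/2}\mathbf{M}$ is adjacency-identifying.
   Context: Graphs are finite, undirected, without self-loops and without isolated nodes; $\mathbf{A}(G)$ is the adjacency matrix, $\mathbf{L}=\mathbf{D}-\mathbf{A}(G)$ and $\tilde{\mathbf{L}}=\mathbf{I}-\mathbf{D}^{-1/2}\mathbf{A}(G)\mathbf{D}^{-1/2}$. In the eigendecomposition, $\mathbf{U}$ is orthogonal and $\mathbf{\Sigma}$ diagonal with the nonnegative eigenvalues. $d_k>0$ is a fixed constant. A matrix $\mathbf{P}\in\mathbb{R}^{n\times e}$ is adjacency-identifying if there exist $\mathbf{W}^Q,\mathbf{W}^K\in\mathbb{R}^{e\times e}$ such that $\tilde{\mathbf{P}}=\frac{1}{\sqrt{d_k}}\mathbf{P}\mathbf{W}^Q(\mathbf{P}\mathbf{W}^K)^T$ satisfies $\tilde{\mathbf{P}}_{ij}=\max_k\tilde{\mathbf{P}}_{ik}\iff\mathbf{A}(G)_{ij}=1$ for all $i,j$. *)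

From HB Require Import structures.
From mathcomp Require Import all_boot all_order all_algebra all_fingroup.
Set Implicit Arguments. Unset Strict Implicit. Unset Printing Implicit Defensive.
Import Order.TTheory GRing.Theory Num.Theory.
Local Open Scope ring_scope.

Definition adjmx (R : rcfType) (n : nat) (adj : rel 'I_n) : 'M[R]_n :=
  \matrix_(i, j) (adj i j)%:R.

Definition degmx (R : rcfType) (n : nat) (A : 'M[R]_n) : 'M[R]_n :=
  diag_mx (\row_i \sum_j A i j).

Definition diag_sqrt (R : rcfType) (n : nat) (M : 'M[R]_n) : 'M[R]_n :=
  diag_mx (\row_i Num.sqrt (M i i)).

Definition norm_lap (R : rcfType) (n : nat) (A : 'M[R]_n) : 'M[R]_n :=
  1%:M - invmx (diag_sqrt (degmx A)) *m A *m invmx (diag_sqrt (degmx A)).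

(* P is adjacency-identifying for adjacency matrix A (with constant dk):
   there are WQ, WK with Pt := 1/sqrt(dk) * P WQ (P WK)^T such that
   Pt_ij = max_k Pt_ik  <->  A_ij = 1.  "Pt_ij is the row maximum" is
   written as "Pt_ik <= Pt_ij for all k". *)
Definition adjacency_identifying (R : rcfType) (n e : nat) (dk : R)
    (A : 'M[R]_n) (P : 'M[R]_(n, e)) : Prop :=
  exists WQ WK : 'M[R]_e,
    let Pt := (Num.sqrt dk)^-1 *: (P *m WQ *m (P *m WK)^T) in
    forall i j, (forall k, Pt i k <= Pt i j) <-> A i j = 1.

From HB Require Import structures.
From mathcomp Require Import all_boot all_order all_algebra all_fingroup.
Import Order.TTheory GRing.Theory Num.Theory.
Local Open Scope ring_scope.

(* With P := D^{1/2} U S^{1/2} M, the permutation M cancels in P P^T and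
   S^{1/2} S^{1/2} = S, so P P^T = D^{1/2} L~ D^{1/2} = D - A is the
   combinatorial Laplacian.  Choosing W^Q = -I and W^K = I makes the score
   matrix a positive multiple of A - D.  In row i of A - D the diagonal entry
   is -deg i < 0 and the other entries are 0 or 1, with a 1 somewhere since i
   is not isolated; so the row maxima are exactly the neighbours of i. *)

Section DiagSqrt.
Variables (R : rcfType) (n : nat).

Lemma tr_diag_sqrt (M : 'M[R]_n) : (diag_sqrt M)^T = diag_sqrt M.
Proof. exact: tr_diag_mx. Qed.

Lemma diag_sqrtK (M : 'M[R]_n) :
  is_diag_mx M -> (forall i, 0 <= M i i) -> diag_sqrt M *m diag_sqrt M = M.
Proof.
move=> /is_diag_mxP Mdiag Mge0; rewrite mulmx_diag; apply/matrixP => i j.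
rewrite !mxE; have [<-|ij] := eqVneq i j; last by rewrite /= mulr0n Mdiag.
by rewrite mulr1n -expr2 sqr_sqrtr.
Qed.

Lemma diag_sqrt_unitmx (M : 'M[R]_n) :
  (forall i, 0 < M i i) -> diag_sqrt M \in unitmx.
Proof.
move=> Mgt0; rewrite unitmxE det_diag unitfE.
by apply/prodf_neq0 => i _; rewrite mxE gt_eqF // sqrtr_gt0.
Qed.

End DiagSqrt.

Lemma perm_mx_mulmx_tr (R : pzRingType) (n : nat) (M : 'M[R]_n) :
  is_perm_mx M -> M *m M^T = 1%:M.
Proof.
by case/is_perm_mxP => s ->; rewrite tr_perm_mx -perm_mxM mulgV perm_mx1.
Qed.

Lemma mulmx_1B_invmx_conj (R : comUnitRingType) (n : nat) (X A : 'M[R]_n) :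
  X \in unitmx -> X *m (1%:M - invmx X *m A *m invmx X) *m X = X *m X - A.
Proof.
move=> Xunit; rewrite mulmxBr mulmxBl mulmx1 !mulmxA mulmxV // mul1mx.
by rewrite -mulmxA mulVmx // mulmx1.
Qed.

Lemma gram_scaled_eigvecs (R : rcfType) (n : nat) (A U S M : 'M[R]_n) :
  (forall i, 0 < degmx A i i) ->
  is_diag_mx S -> (forall i, 0 <= S i i) ->
  norm_lap A = U *m S *m U^T -> M *m M^T = 1%:M ->
  let P := diag_sqrt (degmx A) *m U *m diag_sqrt S *m M in
  P *m P^T = degmx A - A.
Proof.
move=> D_gt0 Sdiag Sge0 Adec MMt P; set X := diag_sqrt (degmx A).
have -> : P *m P^T =
    X *m (U *m (diag_sqrt S *m (M *m M^T) *m (diag_sqrt S)^T) *m U^T) *m X^T.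
  by rewrite /P !trmx_mul !mulmxA.
rewrite MMt mulmx1 !tr_diag_sqrt diag_sqrtK // -Adec.
rewrite mulmx_1B_invmx_conj ?diag_sqrt_unitmx // diag_sqrtK ?diag_mx_is_diag //.
by move=> i; apply/ltW.
Qed.

Section AdjacencyLaplacian.
Variables (R : rcfType) (n : nat) (adj : rel 'I_n).
Hypothesis adj_irr : irreflexive adj.
Hypothesis adj_noiso : forall i, exists j, adj i j.

Local Notation A := (adjmx R adj).

Lemma degmx_adj_gt0 i : 0 < degmx A i i.
Proof.
have [j aij] := adj_noiso i.
rewrite mxE eqxx mulr1n mxE (bigD1 j) //= mxE aij ltr_wpDr ?ltr01 //.
by rewrite sumr_ge0 // => k _; rewrite mxE ler0n.
Qed.

Lemma adj_sub_degE i k :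
  (A - degmx A) i k = if i == k then - degmx A i i else (adj i k)%:R.
Proof.
rewrite !mxE; have [<-|ik] := eqVneq i k; last by rewrite mulr0n subr0.
by rewrite adj_irr eqxx sub0r.
Qed.

Lemma adj_sub_deg_le1 i k : (A - degmx A) i k <= 1.
Proof.
rewrite adj_sub_degE; case: eqP => _; last by case: (adj i k).
by rewrite (le_trans _ ler01) // oppr_le0 ltW // degmx_adj_gt0.
Qed.

Lemma adj_sub_deg_eq1 i k : ((A - degmx A) i k = 1) <-> A i k = 1.
Proof.
rewrite adj_sub_degE [A i k]mxE; case: eqP => [<-|_]; last by [].
rewrite adj_irr; split=> [|/eqP]; last by rewrite eq_sym oner_eq0.
by move=> h; have := degmx_adj_gt0 i; rewrite -oppr_lt0 h ltr10.
Qed.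

Lemma adj_sub_deg_row_max (c : R) i j : 0 < c ->
  (forall k, (c *: (A - degmx A)) i k <= (c *: (A - degmx A)) i j)
  <-> A i j = 1.
Proof.
move=> c_gt0; have scaleE k : (c *: (A - degmx A)) i k = c * (A - degmx A) i k.
  by rewrite mxE.
split=> [jmax|/adj_sub_deg_eq1 j1 k]; last first.
  by rewrite !scaleE j1 ler_pM2l // adj_sub_deg_le1.
apply/adj_sub_deg_eq1; have [k aik] := adj_noiso i.
have k1 : (A - degmx A) i k = 1 by apply/adj_sub_deg_eq1; rewrite mxE aik.
apply/le_anti; rewrite adj_sub_deg_le1 /= -k1 -(ler_pM2l c_gt0) -!scaleE.
exact: jmax.
Qed.

Lemma adjacency_identifying_gram_lap (dk : R) (e : nat) (P : 'M[R]_(n, e)) :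
  0 < dk -> P *m P^T = degmx A - A -> adjacency_identifying dk A P.
Proof.
move=> dk_gt0 PPt; exists (- 1%:M), 1%:M => /= i j.
rewrite mulmxN !mulmx1 mulNmx PPt opprB.
by apply: adj_sub_deg_row_max; rewrite invr_gt0 sqrtr_gt0.
Qed.

End AdjacencyLaplacian.

Theorem lemmaF10 (R : rcfType) (n : nat) (dk : R) (adj : rel 'I_n)
    (Hdk : 0 < dk)
    (Hsym : symmetric adj) (Hirr : irreflexive adj)
    (Hnoiso : forall i : 'I_n, exists j, adj i j)
    (U S : 'M[R]_n)
    (HU : U *m U^T = 1%:M /\ U^T *m U = 1%:M)
    (HSdiag : is_diag_mx S) (HSnn : forall i, 0 <= S i i)
    (Hdec : norm_lap (adjmx R adj) = U *m S *m U^T)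
    (M : 'M[R]_n) (HM : is_perm_mx M) :
  adjacency_identifying dk (adjmx R adj)
    (diag_sqrt (degmx (adjmx R adj)) *m U *m diag_sqrt S *m M).
Proof.
apply: adjacency_identifying_gram_lap => //.
apply: gram_scaled_eigvecs; rewrite ?perm_mx_mulmx_tr //.
exact: degmx_adj_gt0.
Qed.
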